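(* Let $n\ge1$, let $\vec x=x_1,\dots,x_n$ be variables, and let $\sigma$ be a symmetry of the pseudo-Boolean formula $\mathcal{C}$ with support $\{x_{i_1},\dots,x_{i_k}\}$, $i_1<\dots<i_k$. Let $\mathcal{D}$ be a formula containing the circuit constraints for $\sigma$ defined below, and let $C\doteq t_k\ge1$. Then the proof goal $\mathcal{C}\cup\mathcal{D}\cup\{\neg C\}\cup\mathcal{S}(\vec x{\upharpoonright}_\sigma,\vec x,\vec a,\vec d)\vdash\{d_n\ge1\}$ can be shown, i.e., a contradiction $0\ge1$ can be derived from $\mathcal{C}\cup\mathcal{D}\cup\{\bar t_k\ge1\}\cup\mathcal{S}(\vec x{\upharpoonright}_\sigma,\vec x,\vec a,\vec d)\cup\{\bar d_n\ge1\}$, using $O(k)$ RUP steps and cutting planes steps, where the RUP steps require $O(n)$ propagations in total.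
   Context: Literals are $x$ or $\bar x=1-x$; PB constraints $\sum_i c_i\ell_i\ge A$; $\neg(\sum c_i\ell_i\ge A)\doteq\sum c_i\bar\ell_i\ge\sum c_i-A+1$. A symmetry $\sigma$ is a permutation of literals with $\sigma(\bar\ell)=\overline{\sigma(\ell)}$ and finite support $\{x:\sigma(x)\ne x\}$, such that $\mathcal{C}{\upharpoonright}_\sigma$ equals $\mathcal{C}$ syntactically. Lexicographic-order specification $\mathcal{S}(\vec u,\vec v,\vec a,\vec d)$ over $n$ variables: $\bar a_1+u_1+\bar v_1\ge1$; $2a_1+\bar u_1+v_1\ge2$; for $1\le i\le n-2$: $3\bar a_{i+1}+2a_i+u_{i+1}+\bar v_{i+1}\ge3$, $2a_{i+1}+2\bar a_i+\bar u_{i+1}+v_{i+1}\ge2$; $\bar d_1+v_1+\bar u_1\ge1$; $2d_1+\bar v_1+u_1\ge2$; for $1\le i\le n-1$: $4\bar d_{i+1}+3d_i+\bar a_i+v_{i+1}+\bar u_{i+1}\ge4$, $4d_{i+1}+3\bar d_i+a_i+\bar v_{i+1}+u_{i+1}\ge3$. $\mathcal{S}(\vec x{\upharpoonright}_\sigma,\vec x,\vec a,\vec d)$ substitutes $u_i\mapsto\sigma(x_i)$, $v_i\mapsto x_i$; the auxiliary variables $a_i,d_i$ are fresh. Circuit constraints for $\sigma$ (fresh variables $s_1..s_{k-1}$, $t_1..t_k$, writing $p_j=x_{i_j}$, $q_j=\sigma(x_{i_j})$): $\bar s_1+p_1+\bar q_1\ge1$; $2s_1+\bar p_1+q_1\ge2$;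 for $1\le j\le k-2$: $3\bar s_{j+1}+2s_j+p_{j+1}+\bar q_{j+1}\ge3$, $2s_{j+1}+2\bar s_j+\bar p_{j+1}+q_{j+1}\ge2$; $\bar t_1+q_1+\bar p_1\ge1$; $2t_1+\bar q_1+p_1\ge2$; for $1\le j\le k-1$: $4\bar t_{j+1}+3t_j+\bar s_j+q_{j+1}+\bar p_{j+1}\ge4$, $3t_{j+1}+3\bar t_j+s_j+\bar q_{j+1}+p_{j+1}\ge3$. A cutting planes step derives a new constraint from a bounded number of available constraints and literal axioms using addition, positive multiplication, division with rounding up, saturation and weakening. A RUP step derives $D$ if unit propagation on the available constraints together with $\neg D$ reaches a conflict (unit propagation: a constraint with negative slack $\sum_{i:\rho(\ell_i)\ne0}c_i-A$ under partial assignment $\rho$ is a conflict; an unassigned literal whose coefficient exceeds the slack is set to true). *)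

From Stdlib Require Import ZArith List Permutation.
Import ListNotations.
Open Scope Z_scope.

Definition var := nat.
Definition lit := (var * bool)%type.
Definition posl (v : var) : lit := (v, true).
Definition negl (v : var) : lit := (v, false).
Definition lneg (l : lit) : lit := (fst l, negb (snd l)).

(** A PB constraint  sum_i c_i l_i >= A, written as a list of (c_i, l_i). *)
Record pbc := PBC { terms : list (Z * lit) ; degree : Z }.

Definition tvar (t : Z * lit) : var := fst (snd t).
Definition zsum (l : list Z) : Z := fold_right Z.add 0 l.

(** Semantic (normalized) view of a constraint: using \bar x = 1 - x, the
    constraint is  sum_w vcoef c w * w >= vdeg c  over variables. *)
Definition vcoef (c : pbc) (w : var) : Z :=
  zsum (map (fun t : Z * lit => if Nat.eqb (tvar t) w
                      then (if snd (snd t) then fst t else - fst t) else 0)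
            (terms c)).
Definition vdeg (c : pbc) : Z :=
  degree c - zsum (map (fun t : Z * lit => if snd (snd t) then 0 else fst t) (terms c)).
Definition vars (c : pbc) : list var := nodup Nat.eq_dec (map tvar (terms c)).
(** degree of the normalized literal form (positive coefficients) *)
Definition ndeg (c : pbc) : Z :=
  vdeg c + zsum (map (fun w => Z.max 0 (- vcoef c w)) (vars c)).
Definition lcoef (c : pbc) (l : lit) : Z :=
  if snd l then Z.max 0 (vcoef c (fst l)) else Z.max 0 (- vcoef c (fst l)).
Definition same (c1 c2 : pbc) : Prop :=
  (forall w, vcoef c1 w = vcoef c2 w) /\ vdeg c1 = vdeg c2.

Definition pbneg (c : pbc) : pbc :=
  PBC (map (fun t : Z * lit => (fst t, lneg (snd t))) (terms c))
      (zsum (map fst (terms c)) - degree c + 1).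

Definition from_var (ws : list var) (f : var -> Z) (B : Z) : pbc :=
  PBC (map (fun w => (f w, posl w)) ws) B.
Definition zceil (a b : Z) : Z := - ((- a) / b).
Definition negsum (ws : list var) (f : var -> Z) : Z :=
  zsum (map (fun w => Z.max 0 (- f w)) ws).

Definition lit_axiom (l : lit) : pbc := PBC [(1, l)] 0.
Definition cp_add (c1 c2 : pbc) : pbc :=
  PBC (terms c1 ++ terms c2) (degree c1 + degree c2).
Definition cp_mul (m : Z) (c : pbc) : pbc :=
  PBC (map (fun t : Z * lit => (m * fst t, snd t)) (terms c)) (m * degree c).
Definition cp_div (q : Z) (c : pbc) : pbc :=
  let f := fun w => Z.sgn (vcoef c w) * zceil (Z.abs (vcoef c w)) q in
  from_var (vars c) f (zceil (ndeg c) q - negsum (vars c) f).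
Definition cp_sat (c : pbc) : pbc :=
  let f := fun w => Z.sgn (vcoef c w) * Z.min (Z.abs (vcoef c w)) (Z.max 0 (ndeg c)) in
  from_var (vars c) f (ndeg c - negsum (vars c) f).
Definition cp_weak (c : pbc) (w : var) : pbc :=
  from_var (vars c) (fun w' => if Nat.eqb w' w then 0 else vcoef c w')
           (vdeg c - Z.max 0 (vcoef c w)).

Inductive cpexpr :=
| CPHyp (i : nat)
| CPAx (l : lit)
| CPAdd (e1 e2 : cpexpr)
| CPMul (m : Z) (e : cpexpr)
| CPDiv (q : Z) (e : cpexpr)
| CPSat (e : cpexpr)
| CPWeak (e : cpexpr) (w : var).

Fixpoint cp_eval (db : list pbc) (e : cpexpr) : option pbc :=
  match e with
  | CPHyp i => nth_error db i
  | CPAx l => Some (lit_axiom l)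
  | CPAdd e1 e2 =>
      match cp_eval db e1, cp_eval db e2 with
      | Some c1, Some c2 => Some (cp_add c1 c2)
      | _, _ => None
      end
  | CPMul m e => if 0 <? m then option_map (cp_mul m) (cp_eval db e) else None
  | CPDiv q e => if 0 <? q then option_map (cp_div q) (cp_eval db e) else None
  | CPSat e => option_map cp_sat (cp_eval db e)
  | CPWeak e w => option_map (fun c => cp_weak c w) (cp_eval db e)
  end.

Fixpoint cp_size (e : cpexpr) : nat :=
  match e with
  | CPHyp _ | CPAx _ => 1
  | CPAdd e1 e2 => S (cp_size e1 + cp_size e2)
  | CPMul _ e | CPDiv _ e | CPSat e | CPWeak e _ => S (cp_size e)
  end.

(** partial assignment = list of literals assigned true *)
Definition inb (rho : list lit) (l : lit) : bool :=
  existsb (fun l' => andb (Nat.eqb (fst l') (fst l)) (Bool.eqb (snd l') (snd l))) rho.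
Definition slack (c : pbc) (rho : list lit) : Z :=
  zsum (map (fun w => (if inb rho (w, false) then 0 else lcoef c (w, true))
                      + (if inb rho (w, true) then 0 else lcoef c (w, false)))
            (vars c)) - ndeg c.

(** a sequence of unit propagations on the formula F (most recent first) *)
Inductive up_trail (F : list pbc) : list lit -> Prop :=
| up_nil : up_trail F []
| up_cons rho c l :
    up_trail F rho -> In c F -> ~ In l rho -> ~ In (lneg l) rho ->
    lcoef c l > slack c rho -> up_trail F (l :: rho).

Definition rup (db : list pbc) (r : pbc) (m : nat) : Prop :=
  exists rho, up_trail (pbneg r :: db) rho /\ length rho = m /\
    exists c, In c (pbneg r :: db) /\ slack c rho < 0.

Inductive step :=
| CPStep (e : cpexpr) (r : pbc)
| RUPStep (r : pbc) (m : nat).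

Definition step_result (s : step) : pbc :=
  match s with CPStep _ r => r | RUPStep r _ => r end.
Definition step_props (s : step) : nat :=
  match s with CPStep _ _ => 0%nat | RUPStep _ m => m end.

Definition step_ok (B : nat) (db : list pbc) (s : step) : Prop :=
  match s with
  | CPStep e r => (cp_size e <= B)%nat /\ exists c, cp_eval db e = Some c /\ same c r
  | RUPStep r m => rup db r m
  end.

Fixpoint deriv_ok (B : nat) (db : list pbc) (steps : list step) : Prop :=
  match steps with
  | [] => True
  | s :: ss => step_ok B db s /\ deriv_ok B (db ++ [step_result s]) ss
  end.

Definition is_contradiction (r : pbc) : Prop :=
  (forall w, vcoef r w = 0) /\ vdeg r = 1.

Definition apply_sym (sg : lit -> lit) (c : pbc) : pbc :=
  PBC (map (fun t : Z * lit => (fst t, sg (snd t))) (terms c)) (degree c).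
Definition syn_eq (c1 c2 : pbc) : Prop :=
  Permutation (terms c1) (terms c2) /\ degree c1 = degree c2.
Definition in_support (sg : lit -> lit) (v : var) : Prop := sg (posl v) <> posl v.
Definition is_symmetry (sg : lit -> lit) (F : list pbc) : Prop :=
  (forall l, sg (lneg l) = lneg (sg l)) /\
  (exists tau : lit -> lit, (forall l, tau (sg l) = l) /\ (forall l, sg (tau l) = l)) /\
  (exists supp : list var, forall v, in_support sg v -> In v supp) /\
  (forall c, In c F -> exists c', In c' F /\ syn_eq (apply_sym sg c) c') /\
  (forall c', In c' F -> exists c, In c F /\ syn_eq (apply_sym sg c) c').

Definition occurs (v : var) (F : list pbc) : Prop :=
  exists c, In c F /\ In v (map tvar (terms c)).

Definition lexS (n : nat) (u v : nat -> lit) (a d : nat -> var) : list pbc :=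
  [ PBC [(1, negl (a 1%nat)); (1, u 1%nat); (1, lneg (v 1%nat))] 1 ;
    PBC [(2, posl (a 1%nat)); (1, lneg (u 1%nat)); (1, v 1%nat)] 2 ] ++
  flat_map (fun i =>
    [ PBC [(3, negl (a (S i))); (2, posl (a i)); (1, u (S i)); (1, lneg (v (S i)))] 3 ;
      PBC [(2, posl (a (S i))); (2, negl (a i)); (1, lneg (u (S i))); (1, v (S i))] 2 ])
    (seq 1 (n - 2)) ++
  [ PBC [(1, negl (d 1%nat)); (1, v 1%nat); (1, lneg (u 1%nat))] 1 ;
    PBC [(2, posl (d 1%nat)); (1, lneg (v 1%nat)); (1, u 1%nat)] 2 ] ++
  flat_map (fun i =>
    [ PBC [(4, negl (d (S i))); (3, posl (d i)); (1, negl (a i)); (1, v (S i)); (1, lneg (u (S i)))] 4 ;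
      PBC [(4, posl (d (S i))); (3, negl (d i)); (1, posl (a i)); (1, lneg (v (S i))); (1, u (S i))] 3 ])
    (seq 1 (n - 1)).

(** ---------- Circuit constraints for sigma (p_j = x_{i_j}, q_j = sigma(x_{i_j})) ---------- *)
Definition circuit (k : nat) (p q : nat -> lit) (s t : nat -> var) : list pbc :=
  [ PBC [(1, negl (s 1%nat)); (1, p 1%nat); (1, lneg (q 1%nat))] 1 ;
    PBC [(2, posl (s 1%nat)); (1, lneg (p 1%nat)); (1, q 1%nat)] 2 ] ++
  flat_map (fun j =>
    [ PBC [(3, negl (s (S j))); (2, posl (s j)); (1, p (S j)); (1, lneg (q (S j)))] 3 ;
      PBC [(2, posl (s (S j))); (2, negl (s j)); (1, lneg (p (S j))); (1, q (S j))] 2 ])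
    (seq 1 (k - 2)) ++
  [ PBC [(1, negl (t 1%nat)); (1, q 1%nat); (1, lneg (p 1%nat))] 1 ;
    PBC [(2, posl (t 1%nat)); (1, lneg (q 1%nat)); (1, p 1%nat)] 2 ] ++
  flat_map (fun j =>
    [ PBC [(4, negl (t (S j))); (3, posl (t j)); (1, negl (s j)); (1, q (S j)); (1, lneg (p (S j)))] 4 ;
      PBC [(3, posl (t (S j))); (3, negl (t j)); (1, posl (s j)); (1, lneg (q (S j))); (1, p (S j))] 3 ])
    (seq 1 (k - 1)).

From Stdlib Require Import ZArith List Permutation Lia Bool.
Import ListNotations.
Open Scope Z_scope.

(* The refutation consists of RUP steps only. Off the support, sigma fixes x_i, so the
   lexicographic encoding degenerates into the implications d_(i-1) -> d_i and
   a_i -> a_(i-1), which unit propagation follows one index at a time. Walking along the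
   support i_1 < ... < i_k we derive, for each j, the clauses d_(i_j) \/ t_j,
   ~s_j \/ d_(i_j) and ~a_(i_j) \/ t_j, the step from j to j+1 (through the bridge clause
   d_(i_(j+1)) \/ t_(j+1) \/ ~t_j) costing four RUP steps whose propagations run across the
   gap between i_j and i_(j+1). This gives O(k) steps and O(n) propagations in total.
   Finally ~t_k turns d_(i_k) \/ t_k into d_(i_k), which propagates up to d_n and
   contradicts ~d_n.
   Unit propagation is handled semantically: a constraint propagates l under a trail as
   soon as every assignment agreeing with the trail and falsifying l violates it. *)

Definition lit_val (al : var -> bool) (l : lit) : Z :=
  if snd l then Z.b2z (al (fst l)) else 1 - Z.b2z (al (fst l)).
Definition lhs (al : var -> bool) (c : pbc) : Z :=
  zsum (map (fun x : Z * lit => fst x * lit_val al (snd x)) (terms c)).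
Definition sat (al : var -> bool) (c : pbc) : Prop := degree c <= lhs al c.
Definition agrees (al : var -> bool) (rho : list lit) : Prop :=
  forall l, In l rho -> lit_val al l = 1.
Definition consistent (rho : list lit) : Prop :=
  forall w, In (w, true) rho -> In (w, false) rho -> False.

Lemma lit_val_lneg al l : lit_val al (lneg l) = 1 - lit_val al l.
Proof. destruct l as [w []]; unfold lit_val; simpl; destruct (al w); reflexivity. Qed.

Lemma lit_val_neg al w : lit_val al (w, false) = 1 - lit_val al (w, true).
Proof. reflexivity. Qed.

Lemma lit_val_bound al l : 0 <= lit_val al l <= 1.
Proof. destruct l as [w []]; unfold lit_val; simpl; destruct (al w); simpl; lia. Qed.

Lemma agrees_cons al l rho : agrees al (l :: rho) -> lit_val al l = 1 /\ agrees al rho.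
Proof. intros H; split; [apply H; left | intros l' Hl'; apply H; right]; auto. Qed.

Lemma agrees_incl al rho rho' : incl rho rho' -> agrees al rho' -> agrees al rho.
Proof. intros Hi H l Hl; auto. Qed.

Lemma zsum_map_add {T} (f g : T -> Z) L :
  zsum (map (fun x => f x + g x) L) = zsum (map f L) + zsum (map g L).
Proof. induction L; simpl; lia. Qed.

Lemma zsum_map_sub {T} (f g : T -> Z) L :
  zsum (map (fun x => f x - g x) L) = zsum (map f L) - zsum (map g L).
Proof. induction L; simpl; lia. Qed.

Lemma zsum_map_ext {T} (f g : T -> Z) L :
  (forall x, In x L -> f x = g x) -> zsum (map f L) = zsum (map g L).
Proof. induction L; simpl; intros H; auto. rewrite H, IHL; auto. Qed.

Lemma zsum_map_mulr {T} (f : T -> Z) L y :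
  zsum (map f L) * y = zsum (map (fun x => f x * y) L).
Proof. induction L; simpl; lia. Qed.

Lemma zsum_indicator_notin (W : list var) w x : ~ In w W ->
  zsum (map (fun w' => if Nat.eqb w w' then x else 0) W) = 0.
Proof.
  induction W as [|w' W IH]; simpl; auto. intros H.
  destruct (Nat.eqb_spec w w'); [exfalso; auto | rewrite IH; auto].
Qed.

Lemma zsum_indicator_in (W : list var) w x : NoDup W -> In w W ->
  zsum (map (fun w' => if Nat.eqb w w' then x else 0) W) = x.
Proof.
  induction W as [|w' W IH]; simpl; [tauto|]. intros Hnd H. inversion Hnd; subst.
  destruct (Nat.eqb_spec w w').
  - subst. rewrite zsum_indicator_notin; auto; lia.
  - destruct H; [congruence | rewrite IH; auto].
Qed.

Lemma zsum_regroup {T} (L : list T) (f : T -> var) (g : T -> Z) (W : list var) :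
  NoDup W -> (forall x, In x L -> In (f x) W) ->
  zsum (map (fun w => zsum (map (fun x => if Nat.eqb (f x) w then g x else 0) L)) W)
  = zsum (map g L).
Proof.
  intros Hnd. induction L as [|x L IH]; simpl; intros H.
  - clear H. induction W; simpl; auto. inversion Hnd; subst. rewrite IHW; auto.
  - rewrite zsum_map_add, IH, zsum_indicator_in; auto.
Qed.

Lemma vars_NoDup c : NoDup (vars c).
Proof. apply NoDup_nodup. Qed.

Lemma in_vars c x : In x (terms c) -> In (tvar x) (vars c).
Proof. intros H. apply nodup_In, in_map, H. Qed.

Lemma vcoef_notin c w : ~ In w (vars c) -> vcoef c w = 0.
Proof.
  intros H. unfold vcoef. transitivity (zsum (map (fun _ : Z * lit => 0) (terms c))).
  - apply zsum_map_ext. intros x Hx. destruct (Nat.eqb_spec (tvar x) w); auto.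
    subst. exfalso. apply H, in_vars, Hx.
  - induction (terms c); simpl; auto.
Qed.

Lemma lhs_sub_degree c al :
  lhs al c - degree c = zsum (map (fun w => vcoef c w * Z.b2z (al w)) (vars c)) - vdeg c.
Proof.
  set (sgn := fun x : Z * lit => if snd (snd x) then fst x else - fst x).
  assert (Hsplit : lhs al c = zsum (map (fun x => sgn x * Z.b2z (al (tvar x))) (terms c))
            + zsum (map (fun x : Z * lit => if snd (snd x) then 0 else fst x) (terms c))).
  { unfold lhs. rewrite <- zsum_map_add. apply zsum_map_ext.
    intros [z [w []]] _; unfold sgn, lit_val, tvar; cbn [fst snd]; ring. }
  assert (Hregroup : zsum (map (fun w => vcoef c w * Z.b2z (al w)) (vars c))
            = zsum (map (fun x => sgn x * Z.b2z (al (tvar x))) (terms c))).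
  { rewrite <- (zsum_regroup (terms c) tvar _ (vars c) (vars_NoDup c) (in_vars c)).
    apply zsum_map_ext. intros w _. unfold vcoef. rewrite zsum_map_mulr.
    apply zsum_map_ext. intros x _.
    destruct (Nat.eqb_spec (tvar x) w); [subst; reflexivity | lia]. }
  unfold vdeg. rewrite Hsplit, Hregroup. lia.
Qed.

Lemma inb_In rho l : inb rho l = true <-> In l rho.
Proof.
  unfold inb. rewrite existsb_exists. split.
  - intros [[w b] [Hin Heq]]. destruct l as [w' b']. simpl in Heq.
    apply andb_true_iff in Heq as [Hw Hb]. apply Nat.eqb_eq in Hw. apply eqb_prop in Hb.
    subst; auto.
  - intros H. exists l. split; auto. destruct l; simpl. rewrite Nat.eqb_refl, eqb_reflx; auto.
Qed.

Lemma inb_cons l' rho l :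
  inb (l' :: rho) l = (Nat.eqb (fst l') (fst l) && Bool.eqb (snd l') (snd l)) || inb rho l.
Proof. reflexivity. Qed.

Lemma inb_notin rho l : inb rho l = false <-> ~ In l rho.
Proof. rewrite <- inb_In. destruct (inb rho l); intuition congruence. Qed.

(* The slack of [c] under [rho] is the surplus of [c] under the extension of [rho]
   most favourable to [c]. *)
Definition best_extension (rho : list lit) (c : pbc) (w : var) : bool :=
  if inb rho (w, true) then true else if inb rho (w, false) then false else (0 <? vcoef c w).

Lemma slack_best_extension c rho : consistent rho ->
  slack c rho = lhs (best_extension rho c) c - degree c.
Proof.
  intros Hc. rewrite lhs_sub_degree. unfold slack, ndeg.
  enough (zsum (map (fun w => (if inb rho (w, false) then 0 else lcoef c (w, true)) +
            (if inb rho (w, true) then 0 else lcoef c (w, false))) (vars c))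
          - zsum (map (fun w => Z.max 0 (- vcoef c w)) (vars c))
          = zsum (map (fun w => vcoef c w * Z.b2z (best_extension rho c w)) (vars c))) by lia.
  rewrite <- zsum_map_sub. apply zsum_map_ext. intros w _.
  unfold lcoef, best_extension; simpl.
  destruct (inb rho (w, true)) eqn:Et; destruct (inb rho (w, false)) eqn:Ef.
  - exfalso. apply (Hc w); apply inb_In; auto.
  - simpl; lia.
  - simpl; lia.
  - destruct (Z.ltb_spec 0 (vcoef c w)); simpl; lia.
Qed.

Lemma best_extension_agrees c rho : consistent rho -> agrees (best_extension rho c) rho.
Proof.
  intros Hc [w []] H; unfold lit_val, best_extension; simpl.
  - rewrite (proj2 (inb_In _ _) H). reflexivity.
  - assert (Hnt : inb rho (w, true) = false) by (apply inb_notin; intros Ht; apply (Hc w); auto).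
    rewrite Hnt, (proj2 (inb_In _ _) H). reflexivity.
Qed.

Lemma slack_neg_of_unsat c rho : consistent rho ->
  (forall al, agrees al rho -> ~ sat al c) -> slack c rho < 0.
Proof.
  intros Hc H. rewrite slack_best_extension by exact Hc.
  destruct (Z_lt_ge_dec (lhs (best_extension rho c) c - degree c) 0) as [Hlt|Hge]; auto.
  exfalso. apply (H (best_extension rho c)); [apply best_extension_agrees, Hc | unfold sat; lia].
Qed.

Lemma slack_cons_lneg c rho l : ~ In l rho -> ~ In (lneg l) rho ->
  slack c (lneg l :: rho) = slack c rho - lcoef c l.
Proof.
  intros Hl Hnl. destruct l as [w0 b0]. unfold slack.
  assert (E : forall w,
     (if inb (lneg (w0, b0) :: rho) (w, false) then 0 else lcoef c (w, true)) +
     (if inb (lneg (w0, b0) :: rho) (w, true) then 0 else lcoef c (w, false))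
     = (if inb rho (w, false) then 0 else lcoef c (w, true)) +
       (if inb rho (w, true) then 0 else lcoef c (w, false))
       - (if Nat.eqb w0 w then lcoef c (w0, b0) else 0)).
  { intros w. rewrite !inb_cons. cbn [lneg fst snd].
    destruct (Nat.eqb_spec w0 w); cbn [andb orb]; [subst | lia].
    assert (inb rho (w, b0) = false) as E1 by (apply inb_notin; auto).
    assert (inb rho (w, negb b0) = false) as E2 by (apply inb_notin; auto).
    destruct b0; cbn [negb andb orb eqb] in *; rewrite ?E1, ?E2; unfold lcoef; cbn [fst snd]; lia. }
  rewrite (zsum_map_ext _ _ _ (fun w _ => E w)), zsum_map_sub.
  destruct (in_dec Nat.eq_dec w0 (vars c)).
  - rewrite zsum_indicator_in; auto using vars_NoDup. lia.
  - rewrite zsum_indicator_notin; auto. unfold lcoef; simpl. rewrite vcoef_notin; auto.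
    destruct b0; simpl; lia.
Qed.

Lemma consistent_cons rho l : consistent rho -> ~ In (lneg l) rho -> consistent (l :: rho).
Proof.
  intros Hc Hn w Ht Hf. destruct l as [w' b]. unfold lneg in Hn; simpl in *.
  destruct Ht as [Ht|Ht]; destruct Hf as [Hf|Hf]; try congruence.
  - inversion Ht; subst. auto.
  - inversion Hf; subst. auto.
  - eapply Hc; eauto.
Qed.

Lemma lcoef_gt_slack_of_forced c rho l : consistent rho -> ~ In l rho -> ~ In (lneg l) rho ->
  (forall al, agrees al rho -> lit_val al l = 0 -> ~ sat al c) -> lcoef c l > slack c rho.
Proof.
  intros Hc Hl Hnl H.
  assert (Hneg : slack c (lneg l :: rho) < 0).
  { apply slack_neg_of_unsat.
    - apply consistent_cons; auto. destruct l as [w b]; unfold lneg; simpl.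
      rewrite negb_involutive; auto.
    - intros al Hal. apply agrees_cons in Hal as [Hv Hal].
      apply H; auto. rewrite lit_val_lneg in Hv. lia. }
  rewrite slack_cons_lneg in Hneg; auto. lia.
Qed.

Lemma up_trail_consistent F rho : up_trail F rho -> consistent rho.
Proof.
  induction 1 as [|rho c l _ IH _ _ Hnl _]; [intros w []|].
  apply consistent_cons; auto.
Qed.

Definition lit_eq_dec (l l' : lit) : {l = l'} + {l <> l'}.
Proof. decide equality; [apply bool_dec | apply Nat.eq_dec]. Defined.

(* Quantifying over every trail that contains [rho] lets propagation arguments be
   composed, although the trail may already hold literals set by earlier steps. *)
Definition refutes (F : list pbc) (rho : list lit) (m : nat) : Prop :=
  forall rho0, up_trail F rho0 -> incl rho rho0 ->
  exists rho', up_trail F (rho' ++ rho0) /\ (length rho' <= m)%nat /\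
    exists c, In c F /\ slack c (rho' ++ rho0) < 0.

Lemma refutes_le F rho m m' : refutes F rho m -> (m <= m')%nat -> refutes F rho m'.
Proof.
  intros H Hm rho0 Ht Hi. destruct (H rho0 Ht Hi) as [rho' [Ht' [Hlen Hc]]].
  exists rho'; repeat split; auto. lia.
Qed.

Lemma refutes_conflict F rho m c : In c F ->
  (forall al, agrees al rho -> ~ sat al c) -> refutes F rho m.
Proof.
  intros Hc H rho0 Ht Hi. exists []. simpl. repeat split; auto; [lia|].
  exists c; split; auto. apply slack_neg_of_unsat; [eapply up_trail_consistent; eauto|].
  intros al Hal. apply H. eapply agrees_incl; eauto.
Qed.

Lemma refutes_propagate F rho m c l : In c F ->
  (forall al, agrees al rho -> lit_val al l = 0 -> ~ sat al c) ->
  refutes F (l :: rho) m -> refutes F rho (S m).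
Proof.
  intros Hc H HF rho0 Ht Hi.
  destruct (in_dec lit_eq_dec l rho0) as [Hl|Hl].
  - destruct (HF rho0 Ht) as [rho' [Ht' [Hlen Hconf]]]; [now apply incl_cons|].
    exists rho'; repeat split; auto.
  - destruct (in_dec lit_eq_dec (lneg l) rho0) as [Hnl|Hnl].
    + apply (refutes_conflict F rho0 (S m) c Hc); auto using incl_refl.
      intros al Hal. apply H; [eapply agrees_incl; eauto|].
      pose proof (Hal _ Hnl) as Hv. rewrite lit_val_lneg in Hv. lia.
    + assert (Ht' : up_trail F (l :: rho0)).
      { econstructor; eauto. apply lcoef_gt_slack_of_forced; auto.
        - eapply up_trail_consistent; eauto.
        - intros al Hal. apply H. eapply agrees_incl; eauto. }
      destruct (HF (l :: rho0) Ht') as [rho' [Ht'' [Hlen Hconf]]].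
      { intros x [<-|Hx]; simpl; auto. }
      exists (rho' ++ [l]). rewrite <- app_assoc, length_app. simpl.
      repeat split; auto. lia.
Qed.

Lemma rup_of_refutes db r m : refutes (pbneg r :: db) [] m ->
  exists m', (m' <= m)%nat /\ rup db r m'.
Proof.
  intros H. destruct (H [] (up_nil _) (incl_refl _)) as [rho [Ht [Hlen [c [Hc Hs]]]]].
  rewrite app_nil_r in *. exists (length rho). split; auto.
  exists rho. repeat split; auto. exists c; auto.
Qed.

Lemma deriv_ok_app B db ss1 ss2 :
  deriv_ok B db (ss1 ++ ss2) <-> deriv_ok B db ss1 /\ deriv_ok B (db ++ map step_result ss1) ss2.
Proof.
  revert db. induction ss1 as [|s ss1 IH]; intros db; simpl.
  - rewrite app_nil_r. tauto.
  - rewrite IH, <- app_assoc. simpl. tauto.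
Qed.

Definition derivable (B : nat) (F : list pbc) (len props : nat) (cs : list pbc) : Prop :=
  exists ss, deriv_ok B F ss /\ (length ss <= len)%nat /\
    (list_sum (map step_props ss) <= props)%nat /\ incl cs (map step_result ss).

Lemma derivable_nil B F : derivable B F 0 0 [].
Proof. exists []. repeat split; simpl; auto. apply incl_nil_l. Qed.

Lemma derivable_weaken {B F len props cs} len' props' cs' :
  derivable B F len props cs -> (len <= len')%nat -> (props <= props')%nat -> incl cs' cs ->
  derivable B F len' props' cs'.
Proof.
  intros [ss [Hok [Hlen [Hprops Hcs]]]] Hl Hp Hi.
  exists ss. repeat split; auto; [lia | lia | eapply incl_tran; eauto].
Qed.

Lemma derivable_rup {B F len props cs} r {m} :
  derivable B F len props cs ->
  (forall db, incl F db -> incl cs db -> refutes (pbneg r :: db) [] m) ->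
  derivable B F (S len) (props + m) (r :: cs).
Proof.
  intros [ss [Hok [Hlen [Hprops Hcs]]]] Hr.
  destruct (rup_of_refutes (F ++ map step_result ss) r m) as [m' [Hm' Hrup]].
  { apply Hr; [apply incl_appl, incl_refl | apply incl_appr, Hcs]. }
  exists (ss ++ [RUPStep r m']). rewrite !map_app, list_sum_app, length_app. simpl.
  repeat split; [apply deriv_ok_app; simpl; auto | lia | lia |].
  apply incl_cons; [apply in_or_app; right; left; reflexivity | apply incl_appl, Hcs].
Qed.

Lemma NoDup_map_injective {A B} (f : A -> B) l x y :
  NoDup (map f l) -> In x l -> In y l -> f x = f y -> x = y.
Proof.
  induction l as [|z l IH]; simpl; [tauto|]. intros Hnd Hx Hy E. inversion Hnd as [|? ? Hz]; subst.
  destruct Hx as [<-|Hx]; destruct Hy as [<-|Hy]; auto;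
    exfalso; apply Hz; [rewrite E | rewrite <- E]; apply in_map; auto.
Qed.

Lemma strict_incr_gap (f : nat -> nat) (k j j' : nat) :
  (forall i, (1 <= i)%nat -> (i < k)%nat -> (f i < f (S i))%nat) ->
  (1 <= j)%nat -> (j <= j')%nat -> (j' <= k)%nat -> (f j + (j' - j) <= f j')%nat.
Proof.
  intros Hf Hj Hjj' Hj'. induction j' as [|j' IH]; [lia|].
  destruct (Nat.eq_dec j (S j')) as [<-|Hne]; [lia|].
  specialize (Hf j' ltac:(lia) ltac:(lia)). specialize (IH ltac:(lia) ltac:(lia)). lia.
Qed.

Ltac bound_lit_vals :=
  repeat match goal with
  | |- context [lit_val ?al ?x] =>
      lazymatch goal with
      | _ : 0 <= lit_val al x <= 1 |- _ => fail
      | _ => pose proof (lit_val_bound al x)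
      end
  | _ : context [lit_val ?al ?x] |- _ =>
      lazymatch goal with
      | _ : 0 <= lit_val al x <= 1 |- _ => fail
      | _ => pose proof (lit_val_bound al x)
      end
  end.

Section LexLeaderRefutation.

Variables (n k : nat) (xs : nat -> var) (sg : lit -> lit) (idx : nat -> nat)
          (C D : list pbc) (a d s t : nat -> var).

Definition u (i : nat) : lit := sg (posl (xs i)).
Definition v (i : nat) : lit := posl (xs i).
Definition p (j : nat) : lit := v (idx j).
Definition q (j : nat) : lit := u (idx j).

Hypothesis xs_nodup : NoDup (map xs (seq 1 n)).
Hypothesis support_idx : forall y, in_support sg y -> exists j, (1 <= j <= k)%nat /\ y = xs (idx j).
Hypothesis k_pos : (1 <= k)%nat.
Hypothesis idx_first : (1 <= idx 1)%nat.
Hypothesis idx_last : (idx k <= n)%nat.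
Hypothesis idx_incr : forall j, (1 <= j)%nat -> (j < k)%nat -> (idx j < idx (S j))%nat.
Hypothesis circuit_in_D : incl (circuit k p q s t) D.

Definition goal_formula : list pbc :=
  C ++ D ++ [pbneg (PBC [(1, posl (t k))] 1)] ++ lexS n u v a d ++
  [pbneg (PBC [(1, posl (d n))] 1)].

Lemma idx_gap j j' : (1 <= j)%nat -> (j <= j')%nat -> (j' <= k)%nat ->
  (idx j + (j' - j) <= idx j')%nat.
Proof. apply strict_incr_gap, idx_incr. Qed.

Lemma idx_range j : (1 <= j <= k)%nat -> (j <= idx j)%nat /\ (idx j + (k - j) <= idx k)%nat.
Proof. intros Hj. pose proof (idx_gap 1 j). pose proof (idx_gap j k). lia. Qed.

Lemma idx_step_range j : (1 <= j)%nat -> (j < k)%nat ->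
  (1 <= idx j)%nat /\ (idx j < idx (S j))%nat /\ (idx (S j) <= n)%nat.
Proof.
  intros H1 H2. pose proof (idx_range j ltac:(lia)). pose proof (idx_range (S j) ltac:(lia)).
  pose proof (idx_incr j H1 H2). lia.
Qed.

Lemma u_fixed i : (1 <= i <= n)%nat -> (forall j, (1 <= j <= k)%nat -> i <> idx j) -> u i = v i.
Proof.
  intros Hi Hoff. unfold u, v.
  destruct (lit_eq_dec (sg (posl (xs i))) (posl (xs i))) as [Hfix|Hne]; auto.
  exfalso. destruct (support_idx (xs i) Hne) as [j [Hj E]].
  pose proof (idx_range j Hj). apply (Hoff j Hj).
  apply (NoDup_map_injective xs (seq 1 n)); auto; apply in_seq; lia.
Qed.

Lemma u_fixed_before i : (1 <= i)%nat -> (i < idx 1)%nat -> u i = v i.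
Proof.
  intros H1 H2. pose proof (idx_range 1). apply u_fixed; [lia|].
  intros j Hj E. pose proof (idx_gap 1 j). lia.
Qed.

Lemma u_fixed_between j i : (1 <= j)%nat -> (j < k)%nat -> (idx j < i < idx (S j))%nat -> u i = v i.
Proof.
  intros H1 H2 H3. pose proof (idx_range (S j)). apply u_fixed; [lia|].
  intros l Hl E. destruct (Nat.le_gt_cases l j).
  - pose proof (idx_gap l j). lia.
  - pose proof (idx_gap (S j) l). lia.
Qed.

Lemma u_fixed_after i : (idx k < i)%nat -> (i <= n)%nat -> u i = v i.
Proof.
  intros H1 H2. apply u_fixed; [pose proof (idx_range 1); lia|].
  intros j Hj E. pose proof (idx_gap j k). lia.
Qed.

Lemma lex_in c : In c (lexS n u v a d) -> In c goal_formula.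
Proof. intros H. unfold goal_formula. rewrite !in_app_iff. tauto. Qed.

Lemma circuit_in c : In c (circuit k p q s t) -> In c goal_formula.
Proof. intros H. unfold goal_formula. rewrite !in_app_iff. auto. Qed.

Lemma lex_a1_in : In (PBC [(1, negl (a 1)); (1, u 1); (1, lneg (v 1))] 1) goal_formula.
Proof. apply lex_in. simpl; auto. Qed.

Lemma lex_d1_in : In (PBC [(2, posl (d 1)); (1, lneg (v 1)); (1, u 1)] 2) goal_formula.
Proof. apply lex_in. unfold lexS. rewrite !in_app_iff. do 2 right; left. simpl; auto. Qed.

Lemma lex_a_in j : (2 <= j)%nat -> (j <= n - 1)%nat ->
  In (PBC [(3, negl (a j)); (2, posl (a (j - 1))); (1, u j); (1, lneg (v j))] 3) goal_formula.
Proof.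
  intros H1 H2. apply lex_in. unfold lexS. rewrite !in_app_iff. right; left.
  apply in_flat_map. exists (j - 1)%nat. split; [apply in_seq; lia|].
  replace (S (j - 1)) with j by lia. simpl; auto.
Qed.

Lemma lex_d_in j : (2 <= j)%nat -> (j <= n)%nat ->
  In (PBC [(4, posl (d j)); (3, negl (d (j - 1))); (1, posl (a (j - 1)));
           (1, lneg (v j)); (1, u j)] 3) goal_formula.
Proof.
  intros H1 H2. apply lex_in. unfold lexS. rewrite !in_app_iff. do 3 right.
  apply in_flat_map. exists (j - 1)%nat. split; [apply in_seq; lia|].
  replace (S (j - 1)) with j by lia. simpl; auto.
Qed.

Lemma neg_tk_in : In (PBC [(1, negl (t k))] 1) goal_formula.
Proof. unfold goal_formula. rewrite !in_app_iff. do 2 right; left; left; reflexivity. Qed.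

Lemma neg_dn_in : In (PBC [(1, negl (d n))] 1) goal_formula.
Proof. unfold goal_formula. rewrite !in_app_iff. do 4 right; left; reflexivity. Qed.

Lemma circuit_s1_in : In (PBC [(1, negl (s 1)); (1, p 1); (1, lneg (q 1))] 1) goal_formula.
Proof. apply circuit_in. simpl; auto. Qed.

Lemma circuit_t1_in : In (PBC [(2, posl (t 1)); (1, lneg (q 1)); (1, p 1)] 2) goal_formula.
Proof. apply circuit_in. unfold circuit. rewrite !in_app_iff. do 2 right; left. simpl; auto. Qed.

Lemma circuit_s_in j : (1 <= j)%nat -> (S j <= k - 1)%nat ->
  In (PBC [(3, negl (s (S j))); (2, posl (s j)); (1, p (S j)); (1, lneg (q (S j)))] 3) goal_formula.
Proof.
  intros H1 H2. apply circuit_in. unfold circuit. rewrite !in_app_iff. right; left.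
  apply in_flat_map. exists j. split; [apply in_seq; lia | simpl; auto].
Qed.

Lemma circuit_t_in j : (1 <= j)%nat -> (S j <= k)%nat ->
  In (PBC [(3, posl (t (S j))); (3, negl (t j)); (1, posl (s j));
           (1, lneg (q (S j))); (1, p (S j))] 3) goal_formula.
Proof.
  intros H1 H2. apply circuit_in. unfold circuit. rewrite !in_app_iff. do 3 right.
  apply in_flat_map. exists j. split; [apply in_seq; lia | simpl; auto].
Qed.

Definition dt_clause j := PBC [(1, posl (d (idx j))); (1, posl (t j))] 1.
Definition sd_clause j := PBC [(1, negl (s j)); (1, posl (d (idx j)))] 1.
Definition at_clause j := PBC [(1, negl (a (idx j))); (1, posl (t j))] 1.
Definition bridge_clause j :=
  PBC [(1, posl (d (idx (S j)))); (1, posl (t (S j))); (1, negl (t j))] 1.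
Definition falsum := PBC [] 1.

(* Side condition of [refutes_propagate] and [refutes_conflict]: a linear inequality over
   the 0/1 values of the literals, with those on the trail fixed to 1. *)
Ltac violated :=
  let al := fresh "al" in let Hal := fresh "Hal" in
  intros al Hal; try (let Hl := fresh "Hl" in intros Hl);
  repeat match goal with
         | H : agrees al (_ :: _) |- _ => apply agrees_cons in H as [? ?]
         | H : incl ?r ?r', H' : agrees al ?r' |- _ =>
             pose proof (agrees_incl al r r' H H'); clear H
         | H : In ?l ?r, H' : agrees al ?r |- _ => pose proof (H' l H); clear H
         end;
  unfold sat, lhs, pbneg, dt_clause, sd_clause, at_clause, bridge_clause, p, q, u, v in *;
  cbn [terms degree map zsum fold_right fst snd] in *;
  repeat rewrite lit_val_lneg in *; unfold negl, posl in *; repeat rewrite lit_val_neg in *;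
  bound_lit_vals; lia.

Tactic Notation "propagate" constr(l) uconstr(H) :=
  eapply (refutes_propagate _ _ _ _ l); [exact H | violated |].
Tactic Notation "conflict" uconstr(H) := eapply refutes_conflict; [exact H | violated].

Lemma refutes_d_chain F m lo hi : incl goal_formula F -> (1 <= lo)%nat -> (lo <= hi <= n)%nat ->
  (forall i, (lo < i <= hi)%nat -> u i = v i) ->
  forall rho, In (posl (d lo)) rho ->
  (forall rho', incl rho rho' -> In (posl (d hi)) rho' -> refutes F rho' m) ->
  refutes F rho (m + (hi - lo)).
Proof.
  intros HF H1 H2 Hu. remember (hi - lo)%nat as len. revert lo H1 H2 Hu Heqlen.
  induction len as [|len IH]; intros lo H1 H2 Hu Hlen rho Hd Hk.
  - assert (hi = lo) by lia; subst hi. rewrite Nat.add_0_r. apply Hk; auto using incl_refl.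
  - rewrite Nat.add_succ_r. pose proof (lex_d_in (S lo) ltac:(lia) ltac:(lia)) as Hc.
    rewrite Nat.sub_succ, Nat.sub_0_r, (Hu (S lo)) in Hc by lia.
    propagate (posl (d (S lo))) (HF _ Hc).
    apply (IH (S lo)); try lia; [intros i Hi; apply Hu; lia | left; reflexivity |].
    intros rho' Hi Hd'. apply Hk; auto. exact (proj2 (incl_cons_inv Hi)).
Qed.

Lemma refutes_a_chain F m lo hi : incl goal_formula F -> (1 <= lo)%nat -> (lo <= hi <= n - 1)%nat ->
  (forall i, (lo < i <= hi)%nat -> u i = v i) ->
  forall rho, In (posl (a hi)) rho ->
  (forall rho', incl rho rho' -> In (posl (a lo)) rho' -> refutes F rho' m) ->
  refutes F rho (m + (hi - lo)).
Proof.
  intros HF H1 H2 Hu. remember (hi - lo)%nat as len. revert hi H2 Hu Heqlen.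
  induction len as [|len IH]; intros hi H2 Hu Hlen rho Ha Hk.
  - assert (hi = lo) by lia; subst hi. rewrite Nat.add_0_r. apply Hk; auto using incl_refl.
  - rewrite Nat.add_succ_r. pose proof (lex_a_in hi ltac:(lia) ltac:(lia)) as Hc.
    rewrite (Hu hi) in Hc by lia.
    propagate (posl (a (hi - 1))) (HF _ Hc).
    apply (IH (hi - 1)%nat); try lia; [intros i Hi; apply Hu; lia | left; reflexivity |].
    intros rho' Hi Ha'. apply Hk; auto. exact (proj2 (incl_cons_inv Hi)).
Qed.

Lemma refutes_d_before_first F m rho : incl goal_formula F -> (1 < idx 1)%nat ->
  (forall rho', incl rho rho' -> In (posl (d (idx 1 - 1))) rho' -> refutes F rho' m) ->
  refutes F rho (S (m + (idx 1 - 1 - 1))).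
Proof.
  intros HF H1 Hk. pose proof (idx_range 1 ltac:(lia)).
  pose proof lex_d1_in as Hc. rewrite (u_fixed_before 1) in Hc by lia.
  propagate (posl (d 1)) (HF _ Hc).
  apply refutes_d_chain; auto; try lia; [intros i Hi; apply u_fixed_before; lia | apply in_eq |].
  intros rho' Hi Hd. apply Hk; auto. exact (proj2 (incl_cons_inv Hi)).
Qed.

Lemma rup_dt_first db : incl goal_formula db -> refutes (pbneg (dt_clause 1) :: db) [] (idx 1 + 4).
Proof.
  intros Hdb. pose proof (incl_tl (pbneg (dt_clause 1)) Hdb) as HF.
  pose proof (idx_range 1 ltac:(lia)).
  apply (refutes_le _ _ (3 + (idx 1 + 1))); [|lia].
  propagate (negl (d (idx 1))) (in_eq _ _).
  propagate (negl (t 1)) (in_eq _ _).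
  propagate (p 1) (HF _ circuit_t1_in).
  destruct (Nat.eq_dec (idx 1) 1) as [E|E].
  - unfold p, q in *. rewrite E in *. conflict (HF _ lex_d1_in).
  - apply (refutes_le _ _ (S (0 + (idx 1 - 1 - 1)))); [|lia].
    apply refutes_d_before_first; [auto | lia |].
    intros rho' Hi Hd. conflict (HF _ (lex_d_in (idx 1) ltac:(lia) ltac:(lia))).
Qed.

Lemma rup_sd_first db : incl goal_formula db -> refutes (pbneg (sd_clause 1) :: db) [] (idx 1 + 4).
Proof.
  intros Hdb. pose proof (incl_tl (pbneg (sd_clause 1)) Hdb) as HF.
  pose proof (idx_range 1 ltac:(lia)).
  apply (refutes_le _ _ (2 + (idx 1 + 2))); [|lia].
  propagate (posl (s 1)) (in_eq _ _).
  propagate (negl (d (idx 1))) (in_eq _ _).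
  pose proof (HF _ circuit_s1_in) as Hs.
  destruct (Nat.eq_dec (idx 1) 1) as [E|E].
  - unfold p, q in *. rewrite E in *.
    propagate (lneg (v 1)) (HF _ lex_d1_in).
    propagate (u 1) (HF _ lex_d1_in).
    conflict Hs.
  - apply (refutes_le _ _ (S (2 + (idx 1 - 1 - 1)))); [|lia].
    apply refutes_d_before_first; [auto | lia |].
    intros rho' Hi Hd. pose proof (HF _ (lex_d_in (idx 1) ltac:(lia) ltac:(lia))) as Hc.
    propagate (lneg (p 1)) Hc.
    propagate (q 1) Hc.
    conflict Hs.
Qed.

Lemma rup_at_first db : incl goal_formula db -> (1 < k)%nat ->
  refutes (pbneg (at_clause 1) :: db) [] (idx 1 + 4).
Proof.
  intros Hdb Hk. pose proof (incl_tl (pbneg (at_clause 1)) Hdb) as HF.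
  pose proof (idx_step_range 1 ltac:(lia) Hk). pose proof (idx_range 2 ltac:(lia)).
  apply (refutes_le _ _ 4); [|lia].
  propagate (posl (a (idx 1))) (in_eq _ _).
  propagate (negl (t 1)) (in_eq _ _).
  propagate (p 1) (HF _ circuit_t1_in).
  propagate (lneg (q 1)) (HF _ circuit_t1_in).
  destruct (Nat.eq_dec (idx 1) 1) as [E|E].
  - unfold p, q in *. rewrite E in *. conflict (HF _ lex_a1_in).
  - conflict (HF _ (lex_a_in (idx 1) ltac:(lia) ltac:(lia))).
Qed.

Lemma rup_bridge db j : incl goal_formula db -> (1 <= j)%nat -> (j < k)%nat ->
  In (sd_clause j) db ->
  refutes (pbneg (bridge_clause j) :: db) [] (2 * (idx (S j) - idx j) + 8).
Proof.
  intros Hdb Hj1 Hj2 Hsd. pose proof (incl_tl (pbneg (bridge_clause j)) Hdb) as HF.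
  pose proof (idx_step_range j Hj1 Hj2).
  apply (refutes_le _ _ (6 + (0 + (idx (S j) - 1 - idx j)))); [|lia].
  propagate (negl (d (idx (S j)))) (in_eq _ _).
  propagate (negl (t (S j))) (in_eq _ _).
  propagate (posl (t j)) (in_eq _ _).
  propagate (posl (s j)) (HF _ (circuit_t_in j Hj1 Hj2)).
  propagate (p (S j)) (HF _ (circuit_t_in j Hj1 Hj2)).
  propagate (posl (d (idx j))) (in_cons _ _ _ Hsd).
  apply refutes_d_chain; auto; try lia;
    [intros i Hi; apply (u_fixed_between j); lia | apply in_eq |].
  intros rho' Hi Hd. conflict (HF _ (lex_d_in (idx (S j)) ltac:(lia) ltac:(lia))).
Qed.

Lemma rup_dt_succ db j : incl goal_formula db -> (1 <= j)%nat -> (j < k)%nat ->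
  In (bridge_clause j) db -> In (dt_clause j) db -> In (at_clause j) db ->
  refutes (pbneg (dt_clause (S j)) :: db) [] (2 * (idx (S j) - idx j) + 8).
Proof.
  intros Hdb Hj1 Hj2 Hbr Hdt Hat. pose proof (incl_tl (pbneg (dt_clause (S j))) Hdb) as HF.
  pose proof (idx_step_range j Hj1 Hj2).
  apply (refutes_le _ _ (4 + (S (0 + (idx (S j) - 1 - idx j)) + (idx (S j) - 1 - idx j)))); [|lia].
  propagate (negl (d (idx (S j)))) (in_eq _ _).
  propagate (negl (t (S j))) (in_eq _ _).
  propagate (negl (t j)) (in_cons _ _ _ Hbr).
  propagate (posl (d (idx j))) (in_cons _ _ _ Hdt).
  apply refutes_d_chain; auto; try lia;
    [intros i Hi; apply (u_fixed_between j); lia | apply in_eq |].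
  intros rho' Hi Hd.
  propagate (posl (a (idx (S j) - 1))) (HF _ (lex_d_in (idx (S j)) ltac:(lia) ltac:(lia))).
  apply refutes_a_chain; auto; try lia;
    [intros i Hi'; apply (u_fixed_between j); lia | apply in_eq |].
  intros rho'' Hi' Ha. conflict (in_cons _ _ _ Hat).
Qed.

Lemma rup_at_succ db j : incl goal_formula db -> (1 <= j)%nat -> (S j < k)%nat ->
  In (at_clause j) db ->
  refutes (pbneg (at_clause (S j)) :: db) [] (2 * (idx (S j) - idx j) + 8).
Proof.
  intros Hdb Hj1 Hj2 Hat. pose proof (incl_tl (pbneg (at_clause (S j))) Hdb) as HF.
  pose proof (idx_step_range j Hj1 ltac:(lia)). pose proof (idx_step_range (S j) ltac:(lia) Hj2).
  pose proof (HF _ (lex_a_in (idx (S j)) ltac:(lia) ltac:(lia))) as Ha.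
  apply (refutes_le _ _ (3 + (3 + (idx (S j) - 1 - idx j)))); [|lia].
  propagate (posl (a (idx (S j)))) (in_eq _ _).
  propagate (negl (t (S j))) (in_eq _ _).
  propagate (posl (a (idx (S j) - 1))) Ha.
  apply refutes_a_chain; auto; try lia;
    [intros i Hi; apply (u_fixed_between j); lia | apply in_eq |].
  intros rho' Hi Ha'.
  propagate (posl (t j)) (in_cons _ _ _ Hat).
  propagate (lneg (q (S j))) (HF _ (circuit_t_in j Hj1 ltac:(lia))).
  propagate (p (S j)) (HF _ (circuit_t_in j Hj1 ltac:(lia))).
  conflict Ha.
Qed.

Lemma rup_sd_succ db j : incl goal_formula db -> (1 <= j)%nat -> (S j < k)%nat ->
  In (sd_clause j) db ->
  refutes (pbneg (sd_clause (S j)) :: db) [] (2 * (idx (S j) - idx j) + 8).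
Proof.
  intros Hdb Hj1 Hj2 Hsd. pose proof (incl_tl (pbneg (sd_clause (S j))) Hdb) as HF.
  pose proof (idx_step_range j Hj1 ltac:(lia)). pose proof (idx_step_range (S j) ltac:(lia) Hj2).
  pose proof (HF _ (circuit_s_in j Hj1 ltac:(lia))) as Hs.
  apply (refutes_le _ _ (4 + (2 + (idx (S j) - 1 - idx j)))); [|lia].
  propagate (posl (s (S j))) (in_eq _ _).
  propagate (negl (d (idx (S j)))) (in_eq _ _).
  propagate (posl (s j)) Hs.
  propagate (posl (d (idx j))) (in_cons _ _ _ Hsd).
  apply refutes_d_chain; auto; try lia;
    [intros i Hi; apply (u_fixed_between j); lia | apply in_eq |].
  intros rho' Hi Hd. pose proof (HF _ (lex_d_in (idx (S j)) ltac:(lia) ltac:(lia))) as Hc.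
  propagate (lneg (p (S j))) Hc.
  propagate (q (S j)) Hc.
  conflict Hs.
Qed.

Lemma rup_falsum db : incl goal_formula db -> In (dt_clause k) db ->
  refutes (pbneg falsum :: db) [] (n - idx k + 3).
Proof.
  intros Hdb Hdt. assert (HF : incl goal_formula (pbneg falsum :: db)) by now apply incl_tl.
  pose proof (idx_range k ltac:(lia)).
  apply (refutes_le _ _ (2 + (0 + (n - idx k)))); [|lia].
  propagate (negl (t k)) (HF _ neg_tk_in).
  propagate (posl (d (idx k))) (in_cons _ _ _ Hdt).
  apply refutes_d_chain; auto; try lia; [intros i Hi; apply u_fixed_after; lia | apply in_eq |].
  intros rho' Hi Hd. conflict (HF _ neg_dn_in).
Qed.

Definition frontier j : list pbc :=
  dt_clause j :: (if (j <? k)%nat then [sd_clause j; at_clause j] else []).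

Lemma frontier_first : derivable 0 goal_formula 3 (3 * idx 1 + 12) (frontier 1).
Proof.
  pose proof (derivable_rup (dt_clause 1) (derivable_nil 0 goal_formula)
                (fun db HF _ => rup_dt_first db HF)) as H.
  unfold frontier. destruct (Nat.ltb_spec 1 k) as [Hk|Hk].
  - eapply (derivable_rup (sd_clause 1)) in H; [| intros db HF _; now apply rup_sd_first].
    eapply (derivable_rup (at_clause 1)) in H; [| intros db HF _; now apply rup_at_first].
    apply (derivable_weaken _ _ _ H); [lia | lia | intros c; simpl; tauto].
  - apply (derivable_weaken _ _ _ H); [lia | lia | apply incl_refl].
Qed.

Lemma frontier_succ j len props : (1 <= j)%nat -> (j < k)%nat ->
  derivable 0 goal_formula len props (frontier j) ->
  derivable 0 goal_formula (len + 4) (props + 8 * (idx (S j) - idx j) + 32) (frontier (S j)).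
Proof.
  intros Hj1 Hj2 H. unfold frontier in H |- *. rewrite (proj2 (Nat.ltb_lt j k) Hj2) in H.
  eapply (derivable_rup (bridge_clause j)) in H;
    [| intros db HF Hcs; apply rup_bridge; auto; apply Hcs; simpl; tauto].
  eapply (derivable_rup (dt_clause (S j))) in H;
    [| intros db HF Hcs; apply rup_dt_succ; auto; apply Hcs; simpl; tauto].
  destruct (Nat.ltb_spec (S j) k) as [Hk|Hk].
  - eapply (derivable_rup (at_clause (S j))) in H;
      [| intros db HF Hcs; apply rup_at_succ; auto; apply Hcs; simpl; tauto].
    eapply (derivable_rup (sd_clause (S j))) in H;
      [| intros db HF Hcs; apply rup_sd_succ; auto; apply Hcs; simpl; tauto].
    apply (derivable_weaken _ _ _ H); [lia | lia | intros c; simpl; tauto].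
  - apply (derivable_weaken _ _ _ H); [lia | lia | intros c; simpl; tauto].
Qed.

Lemma frontier_derivable j : (1 <= j <= k)%nat ->
  derivable 0 goal_formula (4 * j) (8 * idx j + 40 * j) (frontier j).
Proof.
  induction j as [|j IH]; intros Hj; [lia|].
  destruct (Nat.eq_dec j 0) as [->|Hj0].
  - apply (derivable_weaken _ _ _ frontier_first); [lia | lia | apply incl_refl].
  - pose proof (idx_incr j ltac:(lia) ltac:(lia)).
    apply (derivable_weaken _ _ _ (frontier_succ j _ _ ltac:(lia) ltac:(lia) (IH ltac:(lia))));
      [lia | lia | apply incl_refl].
Qed.

Lemma falsum_derivable : derivable 0 goal_formula (5 * k) (60 * n) [falsum].
Proof.
  pose proof (idx_range k ltac:(lia)) as Hk.
  pose proof (frontier_derivable k ltac:(lia)) as H.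
  unfold frontier in H. rewrite Nat.ltb_irrefl in H.
  eapply (derivable_rup falsum) in H;
    [| intros db HF Hcs; apply rup_falsum; auto; apply Hcs, in_eq].
  apply (derivable_weaken _ _ _ H); [lia | lia | intros c; simpl; tauto].
Qed.

End LexLeaderRefutation.

Theorem lemma15 :
  exists (c1 c2 B : nat),
  forall (n : nat) (xs : nat -> var) (sg : lit -> lit) (k : nat) (idx : nat -> nat)
         (C D : list pbc) (a d s t : nat -> var),
    (1 <= n)%nat ->
    NoDup (map xs (seq 1 n)) ->
    is_symmetry sg C ->
    (1 <= k)%nat ->
    (1 <= idx 1%nat)%nat -> (idx k <= n)%nat ->
    (forall j, (1 <= j)%nat -> (j < k)%nat -> (idx j < idx (S j))%nat) ->
    (forall v, in_support sg v <-> exists j, (1 <= j <= k)%nat /\ v = xs (idx j)) ->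
    (* freshness of the auxiliary variables *)
    (let aux := map a (seq 1 n) ++ map d (seq 1 n) ++
                map s (seq 1 (Nat.max 1 (k - 1))) ++ map t (seq 1 k) in
     NoDup aux /\
     (forall y, In y aux -> ~ In y (map xs (seq 1 n)) /\ ~ occurs y C)) ->
    (forall i, (1 <= i <= n)%nat -> ~ occurs (a i) D /\ ~ occurs (d i) D) ->
    (* D contains the circuit constraints for sg *)
    incl (circuit k (fun j => posl (xs (idx j))) (fun j => sg (posl (xs (idx j)))) s t) D ->
    exists steps : list step,
      deriv_ok B
        (C ++ D ++ [pbneg (PBC [(1, posl (t k))] 1)] ++
         lexS n (fun i => sg (posl (xs i))) (fun i => posl (xs i)) a d ++
         [pbneg (PBC [(1, posl (d n))] 1)]) steps /\
      (length steps <= c1 * k)%nat /\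
      (fold_right Nat.add 0%nat (map step_props steps) <= c2 * n)%nat /\
      exists r, In r (map step_result steps) /\ is_contradiction r.
Proof.
  exists 5%nat, 60%nat, 0%nat.
  (* The refutation only uses the circuit and lexicographic constraints. *)
  intros n xs sg k idx C D a d s t _ Hnodup _ Hk Hfirst Hlast Hincr Hsupp _ _ Hcirc.
  destruct (falsum_derivable n k xs sg idx C D a d s t Hnodup (fun y => proj1 (Hsupp y))
              Hk Hfirst Hlast Hincr Hcirc) as [steps [Hok [Hlen [Hprops Hfalsum]]]].
  exists steps. repeat split; auto.
  exists falsum. split; [apply Hfalsum, in_eq | split; reflexivity].
Qed.
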